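(* Let $\mathcal{P}=\mathbb{Z}_N=\langle\theta\rangle$ and let $\mathcal{O}\subseteq\mathcal{P}^2$ be a minimally closed set of boundary conditions under the action of $\mathrm{SL}(2,\mathbb{Z})$. Then for every $x\in\mathcal{O}$ there exist $m\in\mathbb{Z}$ and $V\in\mathrm{SL}(2,\mathbb{Z})$ such that $x\ast V=(1,\theta^m)\in\mathcal{O}$.
   Context: Boundary conditions are elements of $\mathcal{P}^2=\mathcal{P}\times\mathcal{P}$. The right action of $V=\begin{pmatrix} a&b\\c&d\end{pmatrix}\in\mathrm{SL}(2,\mathbb{Z})$ is $(g,h)\ast V=(g^ah^{-c},g^{-b}h^d)$. A subset is closed if it is mapped into itself by every $V\in\mathrm{SL}(2,\mathbb{Z})$; a closed set is minimally closed if it is nonempty and contains no nonempty proper closed subset. *)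

From mathcomp Require Import all_boot all_order all_algebra all_fingroup.
Set Implicit Arguments. Unset Strict Implicit. Unset Printing Implicit Defensive.
Import GRing.Theory.

(* P is a finite cyclic group gT = <[theta]> (i.e. Z_N, written multiplicatively). *)

Definition zpow (gT : finGroupType) (g : gT) (z : int) : gT :=
  match z with
  | Posz n => (g ^+ n)%g
  | Negz n => (g ^- n.+1)%g
  end.

Definition SL2Z (V : 'M[int]_2) : Prop := (\det V)%R = 1%R.

Definition bc_act (gT : finGroupType) (x : gT * gT) (V : 'M[int]_2) : gT * gT :=
  let a := V ord0 ord0 in let b := V ord0 ord_max in let c := V ord_max ord0 in let d := V ord_max ord_max in
  ((zpow x.1 a * zpow x.2 (- c)%R)%g, (zpow x.1 (- b)%R * zpow x.2 d)%g).

Definition bc_closed (gT : finGroupType) (O : {set gT * gT}) : Prop :=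
  forall V : 'M[int]_2, SL2Z V -> forall x, x \in O -> bc_act x V \in O.

Definition bc_min_closed (gT : finGroupType) (O : {set gT * gT}) : Prop :=
  [/\ O != set0, bc_closed O &
      forall O' : {set gT * gT}, O' != set0 -> O' \subset O -> bc_closed O' -> O' = O].

From mathcomp Require Import all_boot all_order all_algebra all_fingroup.
Set Implicit Arguments. Unset Strict Implicit. Unset Printing Implicit Defensive.
Import GRing.Theory.

(* Every element of O has the form (theta^p, theta^q).  With e = gcd(p, q)
   and Bezout coefficients u p + v q = e, the matrix
   [[q/e, -u], [p/e, v]] lies in SL(2,Z) and sends (theta^p, theta^q) to
   (theta^(p q/e - q p/e), _) = (1, _); closedness keeps the image in O. *)

Definition M22 (a b c d : int) : 'M[int]_2 :=
  \matrix_(i < 2, j < 2) (if (i:nat) == 0%N then (if (j:nat) == 0%N then a else b)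
                          else if (j:nat) == 0%N then c else d).

Lemma det_M22 a b c d : (\det (M22 a b c d) = a * d - b * c)%R.
Proof.
rewrite (expand_det_row _ ord0) !big_ord_recl big_ord0 /cofactor.
by rewrite !det_mx11 !mxE /= /bump /= expr0 expr1 mul1r mulN1r addr0 mulrN.
Qed.

Lemma bc_act_M22 (gT : finGroupType) (x : gT * gT) a b c d :
  bc_act x (M22 a b c d) =
  ((zpow x.1 a * zpow x.2 (- c)%R)%g, (zpow x.1 (- b)%R * zpow x.2 d)%g).
Proof. by rewrite /bc_act !mxE. Qed.

Lemma zpowN_nat (gT : finGroupType) (g : gT) (n : nat) :
  zpow g (- n%:Z)%R = ((g ^+ n)^-1)%g.
Proof. by case: n => [|n] /=; rewrite ?expg0 ?invg1. Qed.

Lemma SL2Z_1 : SL2Z (M22 1 0 0 1).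
Proof. by rewrite /SL2Z det_M22 mulr1 mul0r subr0. Qed.

Lemma SL2Z_Bezout (p q : nat) (u v : int) :
  (0 < gcdn p q)%N -> (u * p%:Z + v * q%:Z = (gcdn p q)%:Z)%R ->
  SL2Z (M22 (q %/ gcdn p q)%:Z (- u)%R (p %/ gcdn p q)%:Z v).
Proof.
move=> e_gt0 Huv; rewrite /SL2Z det_M22 mulNr opprK.
apply: (@mulIf _ (gcdn p q)%:Z); first by rewrite eqz_nat -lt0n.
rewrite mul1r mulrDl -!mulrA -!PoszM !divnK ?dvdn_gcdl ?dvdn_gcdr //.
by rewrite mulrCA -PoszM divnK ?dvdn_gcdr // addrC Huv.
Qed.

Lemma bc_act_expg_fst1 (gT : finGroupType) (g : gT) (p q : nat) :
  exists2 V, SL2Z V & (bc_act (g ^+ p, g ^+ q)%g V).1 = 1%g.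
Proof.
have [->|p_gt0] := posnP p.
  by exists (M22 1 0 0 1); [exact: SL2Z_1 | rewrite bc_act_M22 /= expg0 mul1g].
have e_gt0 : (0 < gcdn p q)%N by rewrite gcdn_gt0 p_gt0.
have [u [v Huv]] := Bezoutz p q.
exists (M22 (q %/ gcdn p q)%:Z (- u)%R (p %/ gcdn p q)%:Z v).
  exact: SL2Z_Bezout.
by rewrite bc_act_M22 /= zpowN_nat -!expgM muln_divCA_gcd mulgV.
Qed.

Theorem lemma2p10 (gT : finGroupType) (theta : gT)
  (Hgen : <[theta]>%g = [set: gT])
  (O : {set gT * gT}) (HO : bc_min_closed O) :
  forall x, x \in O ->
  exists (m : int) (V : 'M[int]_2),
    SL2Z V /\ bc_act x V = (1%g, zpow theta m) /\ (1%g, zpow theta m) \in O.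
Proof.
case: HO => _ O_closed _ [g h].
have theta_pow y : exists n, y = (theta ^+ n)%g by apply/cycleP; rewrite Hgen inE.
have [[p ->] [q ->]] := (theta_pow g, theta_pow h); move=> xO.
have [V SV] := bc_act_expg_fst1 theta p q.
case E: bc_act => [y z] /= y1; have [n zE] := theta_pow z.
have xV : bc_act (theta ^+ p, theta ^+ q)%g V = (1%g, zpow theta n) by rewrite E y1 zE.
exists n, V; rewrite -xV.
by split; [|split; [|exact: O_closed SV _ xO]].
Qed.
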